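(* Let $0<c_1,c_2<1$ with $c_1+c_2=1$ and $c_1\neq c_2$. Then there exists a finitely supported complex sequence $u=(u_n)_{n\in\mathbb{N}}$ such that $$\sum_{k=1}^{\infty}\left[c_1(2k-1)|u_{2k-1}+u_{2k}|^2+c_2(2k)|u_{2k}+u_{2k+1}|^2\right]<\frac{c_1-c_2}{2}\sum_{k=1}^{\infty}\left[|u_{2k-1}|^2-|u_{2k}|^2\right].$$ *)

From HB Require Import structures.
From mathcomp Require Import all_boot all_order all_algebra.
From mathcomp Require Import reals.
From mathcomp.real_closed Require Import complex.
Set Implicit Arguments. Unset Strict Implicit. Unset Printing Implicit Defensive.
Import Order.TTheory GRing.Theory Num.Theory.
Local Open Scope ring_scope.

Definition cmod2 (R : rcfType) (z : complex R) : R :=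
  (complex.Re z) ^+ 2 + (complex.Im z) ^+ 2.

From HB Require Import structures.
From mathcomp Require Import all_boot all_order all_algebra.
From mathcomp Require Import reals.
From mathcomp.real_closed Require Import complex.
From mathcomp Require Import classical_sets filter topology normedtype sequences.
From mathcomp Require Import zify ring lra.
Set Implicit Arguments. Unset Strict Implicit. Unset Printing Implicit Defensive.
Import Order.TTheory GRing.Theory Num.Theory.
Local Open Scope classical_set_scope.
Local Open Scope ring_scope.

(* Real sequences suffice.  Let T_k = 1/k + ... + 1/M and H = T_1, which is as
   large as we like since the harmonic series diverges.
   If c1 > c2, take u_(2k-1) = T_k and u_(2k) = -T_(k+1): the even pairs cancel,
   the odd pairs contribute c1 (2k-1)/k^2 <= 2 c1/k, so the left side is at most
   2 c1 H, while the right side telescopes to (c1 - c2) H^2 / 2.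
   If c1 < c2, take u_(2k) = -T_k, u_(2k+1) = T_(k+1) and u_1 = 2 c1 H: now the
   odd pairs cancel except the first, the left side is c1 (c1 - c2)^2 H^2 + 2 c2 H
   and the right side (c1 - c2)^2 (2 c1 + 1) H^2 / 2, larger by (c1 - c2)^2 H^2 / 2. *)

Lemma sum_nat_if_eq (V : nmodType) (a : V) m n i : (m <= i < n)%N ->
  \sum_(m <= k < n) (if k == i then a else 0) = a.
Proof. by move=> mem_i; rewrite -big_mkcond big_nat1_eq mem_i. Qed.

Section HarmonicTail.
Context {R : realType}.

Definition htail (M k : nat) : R := \sum_(k <= j < M.+1) (j%:R)^-1.

Lemma htail_eq0 M k : (M < k)%N -> htail M k = 0.
Proof. by move=> ltMk; rewrite /htail big_geq. Qed.

Lemma htail_unbounded (B : R) : exists M, B < htail M 1.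
Proof.
have /cvgryPgt/(_ B) [M _ gtB] : series (@harmonic R) @ \oo --> +oo.
  apply: nondecreasing_dvgn_lt; last exact: dvg_harmonic.
  by apply: nondecreasing_series => k _ _; exact: harmonic_ge0.
by exists M; rewrite /htail big_add1; apply: gtB => /=.
Qed.

Lemma htail_telescope (f : R -> R) M N : (M <= N)%N ->
  \sum_(1 <= k < N.+1) (f (htail M k) - f (htail M k.+1)) = f (htail M 1) - f 0.
Proof.
move=> leMN; rewrite (@telescope_sumr_eq _ 1 N.+1 (fun k => - f (htail M k))) //.
  by rewrite htail_eq0 ?ltnS // opprK addrC.
by move=> k _; rewrite opprK addrC.
Qed.

Lemma htail_diff M k : (0 < k)%N ->
  htail M k - htail M k.+1 = if (k <= M)%N then (k%:R)^-1 else 0.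
Proof.
move=> k_gt0; case: leqP => [leKM|ltMk].
  by rewrite /htail big_ltn ?ltnS // addrK.
by rewrite !htail_eq0 ?subrr //; lia.
Qed.

Lemma htail_diff_sqr M k : (0 < k)%N ->
  k%:R * (htail M k - htail M k.+1) ^+ 2 = htail M k - htail M k.+1.
Proof.
move=> k_gt0; rewrite htail_diff //; case: ifP => _; last by rewrite expr0n mulr0.
have k_neq0 : (k%:R : R) != 0 by rewrite pnatr_eq0 -lt0n.
by field.
Qed.

End HarmonicTail.

Section Interleave.
Context {R : rcfType}.
Implicit Types (o e : nat -> R).

Definition interleave o e (n : nat) : R := if odd n then o n./2 else e n./2.

Lemma interleave_double o e k : interleave o e (2 * k) = e k.
Proof. by rewrite /interleave mul2n odd_double doubleK. Qed.

Lemma interleave_doubleS o e k : interleave o e (2 * k + 1) = o k.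
Proof. by rewrite /interleave addn1 mul2n /= odd_double /= uphalf_double. Qed.

Lemma interleave_double_pred o e k : (0 < k)%N -> interleave o e (2 * k - 1) = o k.-1.
Proof.
by move=> k_gt0; rewrite -(interleave_doubleS o e); congr interleave; lia.
Qed.

Lemma interleave_eq0 o e N n :
  (forall k, (N <= k)%N -> o k = 0) -> (forall k, (N <= k)%N -> e k = 0) ->
  (N.*2 <= n)%N -> interleave o e n = 0.
Proof.
move=> o0 e0 leNn; have leNhalf : (N <= n./2)%N by rewrite -[N]doubleK half_leq.
by rewrite /interleave; case: odd; [exact: o0 | exact: e0].
Qed.

Lemma cmod2_real (x : R) : cmod2 x%:C%C = x ^+ 2.
Proof. by rewrite /cmod2 /= expr0n addr0. Qed.

Definition pair_energy (c1 c2 : R) o e (n : nat) : R :=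
  \sum_(1 <= k < n.+1)
     (c1 * ((2 * k - 1)%N)%:R * (o k.-1 + e k) ^+ 2
      + c2 * ((2 * k)%N)%:R * (e k + o k) ^+ 2).

Definition odd_even_gap o e (n : nat) : R :=
  \sum_(1 <= k < n.+1) (o k.-1 ^+ 2 - e k ^+ 2).

Definition real_counterexample (c1 c2 : R) o e (N : nat) : Prop :=
  [/\ forall k, (N <= k)%N -> o k = 0, forall k, (N <= k)%N -> e k = 0
    & pair_energy c1 c2 o e N.*2 < (c1 - c2) / 2 * odd_even_gap o e N.*2].

Lemma complex_counterexample (c1 c2 : R) o e N : real_counterexample c1 c2 o e N ->
  exists (u : nat -> complex R) (N : nat),
    (forall n, (N <= n)%N -> u n = 0) /\
    \sum_(1 <= k < N.+1)
       (c1 * ((2 * k - 1)%N)%:R * cmod2 (u (2 * k - 1)%N + u (2 * k)%N)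
        + c2 * ((2 * k)%N)%:R * cmod2 (u (2 * k)%N + u (2 * k + 1)%N))
    < (c1 - c2) / 2 *
      \sum_(1 <= k < N.+1) (cmod2 (u (2 * k - 1)%N) - cmod2 (u (2 * k)%N)).
Proof.
case=> o0 e0 ineq; exists (fun n => (interleave o e n)%:C%C), N.*2; split.
  by move=> n leNn; rewrite (interleave_eq0 o0 e0 leNn).
under eq_big_nat => k /andP[k_gt0 _].
  by rewrite -!rmorphD !cmod2_real interleave_double_pred // interleave_double
    interleave_doubleS; over.
under [X in _ < _ * X]eq_big_nat => k /andP[k_gt0 _].
  by rewrite !cmod2_real interleave_double_pred // interleave_double; over.
exact: ineq.
Qed.

End Interleave.

Section Witnesses.
Context {R : realType}.

Lemma real_counterexample_gt (c1 c2 : R) M :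
  0 < c1 <= 1 -> c2 < c1 -> 4 / (c1 - c2) < htail M 1 ->
  real_counterexample c1 c2 (fun k => htail M k.+1) (fun k => - htail M k.+1) M.+1.
Proof.
move=> /andP[c1_gt0 c1_le1] lt_c21; set H := htail M 1 => H_big.
have leMN : (M <= M.+1.*2)%N by lia.
split=> [k leMk|k leMk|]; first by rewrite htail_eq0 //; lia.
  by rewrite htail_eq0 ?oppr0 //; lia.
have energy_le : pair_energy c1 c2 (fun k => htail M k.+1) (fun k => - htail M k.+1)
    M.+1.*2 <= 2 * c1 * H.
  rewrite -[H]subr0 -(htail_telescope id leMN) mulr_sumr.
  apply: ler_sum_nat => k /andP[k_gt0 _] /=.
  rewrite prednK // addNr expr0n mulr0 addr0 -[in leRHS](htail_diff_sqr M k_gt0).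
  have le_odd : ((2 * k - 1)%N%:R : R) <= 2 * k%:R by rewrite -natrM ler_nat leq_subr.
  have := mulr_ge0 (ltW c1_gt0) (sqr_ge0 (htail M k - htail M k.+1)).
  nra.
have gap : odd_even_gap (fun k => htail M k.+1) (fun k => - htail M k.+1) M.+1.*2 = H ^+ 2.
  rewrite /odd_even_gap; under eq_big_nat => k /andP[k_gt0 _] do rewrite prednK // sqrrN.
  by rewrite (htail_telescope (fun x => x ^+ 2)) // expr0n subr0.
rewrite gap; apply: le_lt_trans energy_le _.
move: H_big; rewrite ltr_pdivrMr ?subr_gt0 // => H_big.
nra.
Qed.

Lemma real_counterexample_lt (c1 c2 : R) M :
  0 < c1 -> 0 < c2 -> c1 + c2 = 1 -> c1 < c2 -> 4 / (c2 - c1) ^+ 2 < htail M 1 ->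
  real_counterexample c1 c2
    (fun k => if k == 0%N then 2 * c1 * htail M 1 else htail M k.+1)
    (fun k => - htail M k) M.+1.
Proof.
move=> c1_gt0 c2_gt0 c_sum lt_c12; set H := htail M 1 => H_big.
set o := fun k => _; set e := fun k => _.
have leMN : (M <= M.+1.*2)%N by lia.
split=> [k leMk|k leMk|].
- by rewrite /o ifN ?htail_eq0 //; lia.
- by rewrite /e htail_eq0 ?oppr0 //; lia.
have o_pred k : (0 < k)%N -> o k.-1 = if k == 1%N then 2 * c1 * H else htail M k.
  by case: k => [|[|k]].
have o_pos k : (0 < k)%N -> o k = htail M k.+1 by case: k.
have eE k : e k = - htail M k by [].
clearbody o e.
have energy : pair_energy c1 c2 o e M.+1.*2 = c1 * (2 * c1 * H - H) ^+ 2 + 2 * c2 * H.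
  transitivity (\sum_(1 <= k < (M.+1.*2).+1) ((if k == 1%N then c1 * (2 * c1 * H - H) ^+ 2
      else 0) + 2 * c2 * (htail M k - htail M k.+1))).
    apply: eq_big_nat => k /andP[k_gt0 _].
    rewrite o_pred // o_pos // !eE -[in RHS](htail_diff_sqr M k_gt0) natrM.
    case: eqP => [->|_]; last by rewrite addrN expr0n mulr0 add0r; ring.
    by rewrite (_ : (2 * 1 - 1)%N = 1%N) // -/H; ring.
  by rewrite big_split /= sum_nat_if_eq // -mulr_sumr (htail_telescope id) // subr0.
have gap : odd_even_gap o e M.+1.*2 = (2 * c1 * H) ^+ 2 - H ^+ 2.
  rewrite -(@sum_nat_if_eq _ ((2 * c1 * H) ^+ 2 - H ^+ 2) 1 (M.+1.*2).+1 1) //.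
  apply: eq_big_nat => k /andP[k_gt0 _].
  by rewrite o_pred // eE sqrrN; case: eqP => [->|_]; rewrite ?subrr.
rewrite energy gap -subr_gt0.
have c2E : c2 = 1 - c1 by rewrite -c_sum addrAC subrr add0r.
have -> : (c1 - c2) / 2 * ((2 * c1 * H) ^+ 2 - H ^+ 2) - (c1 * (2 * c1 * H - H) ^+ 2 + 2 * c2 * H)
    = H / 2 * (H * (c2 - c1) ^+ 2 - 4 * c2) by rewrite c2E; field.
have gap_gt0 : 0 < (c2 - c1) ^+ 2 by rewrite exprn_gt0 ?subr_gt0.
move: H_big; rewrite ltr_pdivrMr // => H_big.
have H_gt0 : 0 < H by rewrite -(pmulr_lgt0 _ gap_gt0); apply: lt_trans H_big.
apply: mulr_gt0; first by rewrite divr_gt0.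
rewrite subr_gt0; lra.
Qed.

End Witnesses.

Theorem lemma3 (R : realType) (c1 c2 : R) :
  0 < c1 < 1 -> 0 < c2 < 1 -> c1 + c2 = 1 -> c1 != c2 ->
  exists (u : nat -> complex R) (N : nat),
    (forall n, (N <= n)%N -> u n = 0) /\
    \sum_(1 <= k < N.+1)
       (c1 * ((2 * k - 1)%N)%:R * cmod2 (u (2 * k - 1)%N + u (2 * k)%N)
        + c2 * ((2 * k)%N)%:R * cmod2 (u (2 * k)%N + u (2 * k + 1)%N))
    < (c1 - c2) / 2 *
      \sum_(1 <= k < N.+1) (cmod2 (u (2 * k - 1)%N) - cmod2 (u (2 * k)%N)).
Proof.
move=> /andP[c1_gt0 c1_lt1] /andP[c2_gt0 _] c_sum c_neq.
case: ltgtP c_neq => // [lt_c12|lt_c21] _.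
- have [M H_big] := htail_unbounded (4 / (c2 - c1) ^+ 2).
  exact: complex_counterexample (real_counterexample_lt _ _ c_sum lt_c12 H_big).
- have [M H_big] := htail_unbounded (4 / (c1 - c2)).
  apply: complex_counterexample (real_counterexample_gt _ lt_c21 H_big).
  by rewrite c1_gt0 ltW.
Qed.
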